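(* Let $R$ be a tolerance relation on $\{1,\ldots,n\}$ and assume that in each connected component of the graph of $R$ there is a dominant vertex. Then for every $a\in A(R)$ one has $a\succeq 0$ if and only if there exist finitely many $b_1,\ldots,b_k\in A(R)$ with $a=\sum_{i=1}^k b_i\star b_i^*$.
   Context: A tolerance relation on a set $X$ is a reflexive and symmetric relation $R\subset X\times X$; its graph is the undirected graph with vertex set $X$ and an edge between $i\neq j$ whenever $(i,j)\in R$. A dominant vertex of a graph is a vertex adjacent to all other vertices (here: of its connected component). Let $T:M_n(\mathbb{C})\to M_n(\mathbb{C})$, $T(b)=\sum_{(i,j)\in R}E_{ii}bE_{jj}$ (i.e. $T$ sets to zero the entries in positions $(i,j)\notin R$), where $E_{ij}$ are matrix units. $A(R)=T(M_n(\mathbb{C}))$, with product $a\star b:=T(ab)$ and involution the conjugate transpose. For $a\in A(R)$, write $a\succeq 0$ if there exists a positive semidefinite $b\in M_n(\mathbb{C})$ with $a=T(b)$. *)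

From HB Require Import structures.
From mathcomp Require Import all_boot all_order all_algebra.
From mathcomp Require Import reals complex.
Set Implicit Arguments. Unset Strict Implicit. Unset Printing Implicit Defensive.
Import Order.TTheory GRing.Theory Num.Theory.
Local Open Scope ring_scope.

Definition tolerance (n : nat) (R : rel 'I_n) : Prop := reflexive R /\ symmetric R.

Definition tol_graph (n : nat) (R : rel 'I_n) : rel 'I_n := fun i j => (i != j) && R i j.

Definition dominant_in_component (n : nat) (R : rel 'I_n) (v : 'I_n) : Prop :=
  forall w, connect (tol_graph R) v w -> w != v -> tol_graph R v w.

Definition each_component_has_dominant (n : nat) (R : rel 'I_n) : Prop :=
  forall i, exists v, connect (tol_graph R) i v /\ dominant_in_component R v.

Definition adjmx (C : numClosedFieldType) (m p : nat) (b : 'M[C]_(m, p)) : 'M[C]_(p, m) :=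
  \matrix_(i, j) (b j i)^*.

Definition Tmask (C : numClosedFieldType) (n : nat) (R : rel 'I_n) (b : 'M[C]_n) : 'M[C]_n :=
  \matrix_(i, j) (if R i j then b i j else 0).

Definition inAR (C : numClosedFieldType) (n : nat) (R : rel 'I_n) (a : 'M[C]_n) : Prop :=
  exists b, a = Tmask R b.

Definition starmul (C : numClosedFieldType) (n : nat) (R : rel 'I_n) (a b : 'M[C]_n) : 'M[C]_n :=
  Tmask R (a *m b).

Definition psdmx (C : numClosedFieldType) (n : nat) (b : 'M[C]_n) : Prop :=
  adjmx b = b /\ forall x : 'cV[C]_n, 0 <= (adjmx x *m b *m x) 0 0.

Definition ARpos (C : numClosedFieldType) (n : nat) (R : rel 'I_n) (a : 'M[C]_n) : Prop :=
  exists b, psdmx b /\ a = Tmask R b.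

(* A positive semidefinite matrix is a sum of rank-one matrices c c^*, so it suffices to
   write the mask of each c c^* as a sum of hermitian squares in A(R).  Send every vertex i
   to the dominant vertex f i of its component; then (i, f i) lies in R, and R i j forces
   f i = f j.  For each u let B_u be the matrix whose only nonzero column is column u,
   carrying the entries c_i with f i = u; it lies in A(R), and the sum over u of B_u B_u^*
   agrees with c c^* at every position of R. *)
From mathcomp Require Import all_boot all_order all_algebra.
From mathcomp Require Import reals complex.
From mathcomp Require Import sesquilinear spectral ring.
Set Implicit Arguments. Unset Strict Implicit. Unset Printing Implicit Defensive.
Import GRing.Theory Num.Theory.
Local Open Scope ring_scope.

Section ConjugateTranspose.
Variable C : numClosedFieldType.
Local Open Scope sesquilinear_scope.

Lemma adjmxE m p (b : 'M[C]_(m, p)) : adjmx b = b ^t*.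
Proof. by apply/matrixP => i j; rewrite !mxE. Qed.

Lemma adjmx_mul m p q (A : 'M[C]_(m, p)) (B : 'M[C]_(p, q)) :
  adjmx (A *m B) = adjmx B *m adjmx A.
Proof. by rewrite !adjmxE trmx_mul map_mxM. Qed.

Lemma adjmxK m p (A : 'M[C]_(m, p)) : adjmx (adjmx A) = A.
Proof. by rewrite !adjmxE trmxCK. Qed.

Lemma adjmx_sum m p (I : finType) (F : I -> 'M[C]_(m, p)) :
  adjmx (\sum_l F l) = \sum_l adjmx (F l).
Proof.
apply/matrixP => i j; rewrite !mxE !summxE rmorph_sum.
by apply: eq_bigr => l _; rewrite !mxE.
Qed.

Lemma adjmx_mul_self_ge0 n (y : 'cV[C]_n) : 0 <= (adjmx y *m y) 0 0.
Proof.
rewrite mxE; apply: sumr_ge0 => i _; rewrite mxE mulrC; exact: mul_conjC_ge0.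
Qed.

End ConjugateTranspose.

Section PositiveSemidefinite.
Variable C : numClosedFieldType.
Local Open Scope sesquilinear_scope.

Lemma psdmx_sum_mul_adj n p (I : finType) (b : I -> 'M[C]_(n, p)) :
  psdmx (\sum_l b l *m adjmx (b l)).
Proof.
split.
  by rewrite adjmx_sum; apply: eq_bigr => l _; rewrite adjmx_mul adjmxK.
move=> x; rewrite mulmx_sumr mulmx_suml summxE; apply: sumr_ge0 => l _.
rewrite mulmxA -(mulmxA _ _ x).
have -> : adjmx x *m b l = adjmx (adjmx (b l) *m x) by rewrite adjmx_mul adjmxK.
exact: adjmx_mul_self_ge0.
Qed.

Lemma psdmx_factor n (A : 'M[C]_n) : psdmx A ->
  exists c : 'I_n -> 'cV[C]_n, A = \sum_k c k *m adjmx (c k).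
Proof.
move=> [A_herm A_ge0].
have /orthomx_spectralP A_diag : A \is normalmx.
  by apply/normalmxP; rewrite -adjmxE A_herm.
set P := spectralmx A in A_diag; set d := spectral_diag A in A_diag.
have P_unitary : P *m P^t* = 1%:M by apply/eqP/spectral_unitarymx.
rewrite invmx_unitary ?spectral_unitarymx // in A_diag.
set Q := P^t* in A_diag P_unitary.
have d_ge0 k : 0 <= d 0 k.
  have := A_ge0 (Q *m delta_mx k 0).
  rewrite adjmx_mul A_diag [adjmx Q]adjmxE /Q trmxCK -/Q.
  rewrite !mulmxA -(mulmxA _ P Q) P_unitary mulmx1 -(mulmxA _ P Q) P_unitary mulmx1.
  rewrite -mulmxA mul_diag_mx mxE (bigD1 k) //= big1 ?addr0.
    by rewrite !mxE !eqxx /= conjC1 mulr1 mul1r.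
  by move=> j /negbTE jk; rewrite !mxE jk /= conjC0 mul0r.
exists (fun k => sqrtC (d 0 k) *: col k Q); apply/matrixP => i j.
rewrite A_diag mxE summxE; apply: eq_bigr => k _.
rewrite mul_mx_diag !mxE big_ord1 !mxE rmorphM /= conjCK.
rewrite [(sqrtC _)^*]geC0_conj ?sqrtC_ge0 // -{1}(sqrtCK (d 0 k)) expr2; ring.
Qed.

End PositiveSemidefinite.

Lemma Tmask_sum (C : numClosedFieldType) n (R : rel 'I_n) (I : finType)
    (F : I -> 'M[C]_n) :
  Tmask R (\sum_l F l) = \sum_l Tmask R (F l).
Proof.
apply/matrixP => i j; rewrite !mxE !summxE.
case Rij: (R i j); first by apply: eq_bigr => l _; rewrite mxE Rij.
by rewrite big1 // => l _; rewrite mxE Rij.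
Qed.

Lemma tolerance_dominant_hub n (R : rel 'I_n) :
  tolerance R -> each_component_has_dominant R ->
  exists f : 'I_n -> 'I_n, (forall i, R i (f i)) /\ (forall i j, R i j -> f i = f j).
Proof.
move=> [R_refl R_sym] has_dom; set G := tol_graph R.
have G_sym : connect_sym G by apply: sym_connect_sym => x y; rewrite /G /tol_graph eq_sym R_sym.
have [g g_dom] := fin_all_exists has_dom.
exists (fun i => g (fingraph.root G i)); split=> [i | i j Rij].
  have [root_g g_dominant] := g_dom (fingraph.root G i).
  have i_g := connect_trans (connect_root G i) root_g.
  have [<- // | i_neq_g] := eqVneq i (g (fingraph.root G i)).
  have /andP[_] := g_dominant i (etrans (G_sym _ _) i_g) i_neq_g.
  by rewrite R_sym.
congr g; apply/(fingraph.rootP G_sym).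
have [-> // | i_neq_j] := eqVneq i j.
by apply: connect1; rewrite /G /tol_graph i_neq_j Rij.
Qed.

Section HubDecomposition.
Variables (C : numClosedFieldType) (n : nat) (R : rel 'I_n) (f : 'I_n -> 'I_n).
Hypothesis R_hub : forall i, R i (f i).
Hypothesis hub_const : forall i j, R i j -> f i = f j.

Definition hub_mx (c : 'cV[C]_n) (u : 'I_n) : 'M[C]_n :=
  \matrix_(i, j) if (j == u) && (f i == u) then c i 0 else 0.

Lemma hub_mx_inAR c u : inAR R (hub_mx c u).
Proof.
exists (hub_mx c u); apply/matrixP => i j; rewrite !mxE.
case Rij: (R i j) => //; case: ifP => // /andP[/eqP j_u /eqP fi_u].
by rewrite j_u -fi_u R_hub in Rij.
Qed.

Lemma hub_mx_mul_adj c u i j :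
  (hub_mx c u *m adjmx (hub_mx c u)) i j =
    if (f i == u) && (f j == u) then c i 0 * (c j 0)^* else 0.
Proof.
rewrite mxE (bigD1 u) //= big1 ?addr0; last first.
  by move=> k /negbTE k_neq_u; rewrite !mxE k_neq_u mul0r.
rewrite !mxE eqxx /=.
by case: eqP; case: eqP => //= _ _; rewrite ?mul0r ?conjC0 ?mulr0.
Qed.

Lemma Tmask_rank1_hub c :
  Tmask R (c *m adjmx c) = \sum_u starmul R (hub_mx c u) (adjmx (hub_mx c u)).
Proof.
rewrite /starmul -Tmask_sum; apply/matrixP => i j; rewrite !mxE summxE.
case Rij: (R i j) => //; rewrite big_ord1 !mxE.
under eq_bigr do rewrite hub_mx_mul_adj.
rewrite (bigD1 (f i)) //= big1 ?addr0; last by move=> u; rewrite eq_sym => /negbTE ->.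
by rewrite (hub_const Rij) eqxx.
Qed.

End HubDecomposition.

Lemma ARpos_sum_starmul (C : numClosedFieldType) n (R : rel 'I_n) (f : 'I_n -> 'I_n)
    (a : 'M[C]_n) :
  (forall i, R i (f i)) -> (forall i j, R i j -> f i = f j) -> ARpos R a ->
  exists (k : nat) (b : 'I_k -> 'M[C]_n),
    (forall l, inAR R (b l)) /\ a = \sum_(l < k) starmul R (b l) (adjmx (b l)).
Proof.
move=> R_hub hub_const [p [p_psd ->]]; have [c ->] := psdmx_factor p_psd.
pose b (ku : 'I_n * 'I_n) := hub_mx f (c ku.1) ku.2.
exists #|{: 'I_n * 'I_n}|, (fun l => b (enum_val l)); split=> [l|].
  exact: hub_mx_inAR.
rewrite Tmask_sum (eq_bigr _ (fun k _ => Tmask_rank1_hub hub_const (c k))) pair_bigA.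
rewrite -(big_enum_val (fun ku => starmul R (b ku) (adjmx (b ku)))).
by apply: eq_bigl.
Qed.

Lemma sum_starmul_ARpos (C : numClosedFieldType) n (R : rel 'I_n) k
    (b : 'I_k -> 'M[C]_n) :
  ARpos R (\sum_(l < k) starmul R (b l) (adjmx (b l))).
Proof.
exists (\sum_l b l *m adjmx (b l)); split; first exact: psdmx_sum_mul_adj.
by rewrite Tmask_sum.
Qed.

Theorem proposition4p4 (Rr : realType) (n : nat) (R : rel 'I_n) :
  tolerance R -> each_component_has_dominant R ->
  forall a : 'M[Rr[i]]_n, inAR R a ->
    (ARpos R a <->
     exists (k : nat) (b : 'I_k -> 'M[Rr[i]]_n),
       (forall l, inAR R (b l)) /\
       a = \sum_(l < k) starmul R (b l) (adjmx (b l))).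
Proof.
move=> R_tol R_dom a _; have [f [R_hub hub_const]] := tolerance_dominant_hub R_tol R_dom.
split; first exact: ARpos_sum_starmul R_hub hub_const.
by case=> k [b [_ ->]]; apply: sum_starmul_ARpos.
Qed.
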